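(* Let $\beta_1=\frac{p_1}{q_1}>1$ and $\beta_2=\frac{p_2}{q_2}>1$ with $\gcd(p_1,q_1)=\gcd(p_2,q_2)=1$, and suppose $p_1\neq kq_2$ for every $k\in\mathbb{N}$. Write $\frac{p_1}{q_2}=\frac{p}{z}$ with $\gcd(p,z)=1$ (so $z>1$). Then for every $n\ge 1$ there are integers $t_n$ and $m_n\ge 1$ such that $T_{\beta_1\circ\beta_2}^n(1)=\frac{t_n}{m_n z^n}$ and $\gcd(t_n,z)=1$. Consequently the set $O_{T_{\beta_1\circ\beta_2}}(1)$ is infinite.
   Context: For a real number $\gamma>1$ let $T_\gamma:[0,1)\to[0,1)$, $T_\gamma(x)=\gamma x \bmod 1$, and $T_{\beta_1\circ\beta_2}:=T_{\beta_1}\circ T_{\beta_2}$. The value at $1$ is defined as the left limit, $T_{\beta_1\circ\beta_2}(1):=\lim_{x\nearrow1}T_{\beta_1\circ\beta_2}(x)$ (equivalently $T_{\beta_2}(1):=1$ and $T_{\beta_1}(1):=\lim_{x\nearrow 1}T_{\beta_1}(x)$), and $T^n_{\beta_1\circ\beta_2}(1):=T^{n-1}_{\beta_1\circ\beta_2}(T_{\beta_1\circ\beta_2}(1))$ for $n\ge2$. The orbit set is $O_{T_{\beta_1\circ\beta_2}}(1):=\{T^k_{\beta_1\circ\beta_2}(1):k\ge1\}$. *)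

From HB Require Import structures.
From mathcomp Require Import all_boot all_order all_algebra.
From mathcomp Require Import all_classical all_reals all_analysis.
Set Implicit Arguments. Unset Strict Implicit. Unset Printing Implicit Defensive.
Import Order.TTheory GRing.Theory Num.Theory.
Import numFieldNormedType.Exports.
Local Open Scope classical_set_scope.
Local Open Scope ring_scope.

Definition Tb (R : realType) (g : R) (x : R) : R :=
  g * x - (Num.floor (g * x))%:~R.

Definition Tcomp (R : realType) (b1 b2 : R) (x : R) : R := Tb b1 (Tb b2 x).

Definition Tcomp_at1 (R : realType) (b1 b2 : R) : R :=
  lim (Tcomp b1 b2 x @[x --> (1 : R)^'-]).

Definition Text (R : realType) (b1 b2 : R) (x : R) : R :=
  if x == 1 then Tcomp_at1 b1 b2 else Tcomp b1 b2 x.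

Definition Titer1 (R : realType) (b1 b2 : R) (n : nat) : R :=
  iter n (Text b1 b2) 1.

Definition orbit1 (R : realType) (b1 b2 : R) : set R :=
  [set y | exists k : nat, (1 <= k)%N /\ y = Titer1 b1 b2 k].

From HB Require Import structures.
From mathcomp Require Import all_boot all_order all_algebra.
From mathcomp Require Import all_classical all_reals all_analysis.
From mathcomp Require Import ring.
Import Order.TTheory GRing.Theory Num.Theory.
Import numFieldNormedType.Exports.
Local Open Scope classical_set_scope.
Local Open Scope ring_scope.
Set Implicit Arguments.
Unset Strict Implicit.

(* Write p1/q2 = p/z in lowest terms, so that z divides q2 and is coprime to
   p2 and to p. If x = t/D with gcd(t, z) = 1, then T_{b2} x = s/(q2 D) with
   s = p2 t mod q2 D, and T_{b1} of that is t'/(q1 z D) with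
   t' = p s mod q1 z D; reducing modulo a multiple of z does not affect
   coprimality with z, so gcd(t', z) = 1 again. Hence T^n(1) = t_n/(q1^n z^n)
   with gcd(t_n, z) = 1, and T^n(1) = T^k(1) for n < k would force z to divide
   t_k, so the orbit is infinite. Both intermediate values at 1 are nonzero, so
   the composition is affine on a left neighbourhood of 1 and its left limit
   there is its value. *)

Section LeftLimit.
Variable R : realType.

Lemma floor_eq_left (x y : R) :
  (Num.floor y)%:~R < x <= y -> Num.floor x = Num.floor y.
Proof.
case/andP=> yx xy; apply: floor_def; rewrite ltW //=.
exact: le_lt_trans xy (floorD1_gt y).
Qed.

Lemma Tb_left_affine (g y : R) : 0 < g -> 0 < Tb g y ->
  exists2 c, c < y & forall x, c < x <= y ->
    Tb g x = g * x - (Num.floor (g * y))%:~R.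
Proof.
move=> g0 Ty0; exists ((Num.floor (g * y))%:~R / g).
  by rewrite ltr_pdivrMr // [y * g]mulrC -subr_gt0.
move=> x /andP[cx xy]; rewrite /Tb (@floor_eq_left (g * x) (g * y)) //.
by rewrite -ltr_pdivrMl // mulrC cx ler_pM2l.
Qed.

Lemma Tcomp_left_affine (b1 b2 y : R) : 0 < b1 -> 0 < b2 ->
  0 < Tb b2 y -> 0 < Tb b1 (Tb b2 y) ->
  exists2 c, c < y & forall x, c < x <= y ->
    Tcomp b1 b2 x = b1 * (b2 * x - (Num.floor (b2 * y))%:~R)
                    - (Num.floor (b1 * Tb b2 y))%:~R.
Proof.
move=> b10 b20 T2y T12y.
have [c2 c2y e2] := Tb_left_affine b20 T2y.
have [c1 c1T e1] := Tb_left_affine b10 T12y.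
have T2yE : Tb b2 y = b2 * y - (Num.floor (b2 * y))%:~R by [].
exists (Num.max c2 ((c1 + (Num.floor (b2 * y))%:~R) / b2)).
  by rewrite gt_max c2y ltr_pdivrMr // [y * b2]mulrC -ltrBrDr -T2yE.
move=> x /andP[]; rewrite gt_max => /andP[c2x c1x] xy.
rewrite ltr_pdivrMr // [x * b2]mulrC -ltrBrDr in c1x.
rewrite /Tcomp e2 ?c2x ?xy // e1 // c1x T2yE lerB // ler_pM2l //.
Qed.

Lemma Tcomp_at1E (b1 b2 : R) : 0 < b1 -> 0 < b2 ->
  0 < Tb b2 1 -> 0 < Tb b1 (Tb b2 1) -> Tcomp_at1 b1 b2 = Tcomp b1 b2 1.
Proof.
move=> b10 b20 T21 T121.
have [c c1 e] := Tcomp_left_affine b10 b20 T21 T121.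
pose h x := b1 * (b2 * x - (Num.floor (b2 * 1))%:~R)
             - (Num.floor (b1 * Tb b2 1))%:~R.
have -> : Tcomp b1 b2 1 = h 1 by rewrite e // c1 lexx.
have h_cont : h x @[x --> (1 : R)^'-] --> h 1.
  apply: cvg_at_left_filter; apply: cvgB; last exact: cvg_cst.
  apply: cvgM; first exact: cvg_cst.
  apply: cvgB; last exact: cvg_cst.
  by apply: cvgM; [exact: cvg_cst | exact: cvg_id].
apply: cvg_lim => //; apply: cvg_trans h_cont; apply: near_eq_cvg.
near=> x; rewrite e //; apply/andP; split; near: x.
  exact: nbhs_left_gt.
exact: nbhs_left_le.
Unshelve. all: by end_near.
Qed.

End LeftLimit.

Lemma floor_natr_div (R : realType) (a b : nat) : (0 < b)%N ->
  Num.floor (a%:R / b%:R : R) = (a %/ b)%:Z.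
Proof.
move=> b0; have b0R : (0 : R) < b%:R by rewrite ltr0n.
apply: floor_def; rewrite intrD /= !pmulrn -natrD ler_pdivlMr // ltr_pdivrMr //.
by rewrite -!natrM ler_nat ltr_nat leq_divM addn1 ltn_ceil.
Qed.

Lemma Tb_natr_div (R : realType) (a b t D : nat) : (0 < b)%N -> (0 < D)%N ->
  Tb (a%:R / b%:R : R) (t%:R / D%:R) = ((a * t) %% (b * D))%:R / (b * D)%:R.
Proof.
move=> b0 D0; have bD0 : (0 < b * D)%N by rewrite muln_gt0 b0.
have bD0R : (b * D)%:R != 0 :> R by rewrite pnatr_eq0 -lt0n.
rewrite /Tb mulf_div -!natrM floor_natr_div // {1}(divn_eq (a * t) (b * D)).
by rewrite natrD natrM mulrDl mulfK // -pmulrn addrC addKr.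
Qed.

Lemma coprime_mod_dvd (a M z : nat) : (z %| M)%N ->
  coprime (a %% M) z = coprime a z.
Proof. by move=> zM; rewrite -coprime_modl (modn_dvdm _ zM) coprime_modl. Qed.

Lemma coprime_ndvd (s z : nat) : (1 < z)%N -> coprime s z -> ~~ (z %| s)%N.
Proof.
move=> z_gt1; apply: contraL => /gcdn_idPr z_gcd.
by rewrite /coprime z_gcd gtn_eqF.
Qed.

Lemma coprime_gt0 (s z : nat) : (1 < z)%N -> coprime s z -> (0 < s)%N.
Proof. by move=> z_gt1 /(coprime_ndvd z_gt1); case: s => //; rewrite dvdn0. Qed.

Lemma reduced_denom_gt1 (p1 q2 p z : nat) : (forall k, p1 <> (k * q2)%N) ->
  (0 < z)%N -> (p1 * z)%N = (p * q2)%N -> (1 < z)%N.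
Proof.
move=> p1_not_mul; case: z => [|[|//]] // _; rewrite muln1.
by move/p1_not_mul.
Qed.

Lemma reduced_denom_dvd (p1 q2 p z : nat) : coprime p z ->
  (p1 * z)%N = (p * q2)%N -> (z %| q2)%N.
Proof.
rewrite coprime_sym => cozp p1z_pq2.
by rewrite -(Gauss_dvdl q2 cozp) mulnC -p1z_pq2 dvdn_mull.
Qed.

Lemma natr_div_eq_dvd (R : realType) (t t' A B : nat) :
  (0 < A)%N -> (0 < B)%N ->
  (t%:R / A%:R : R) = t'%:R / (A * B)%:R -> (B %| t')%N.
Proof.
move=> A0 B0 /eqP; rewrite eqr_div ?pnatr_eq0 -?lt0n ?muln_gt0 ?A0 ?B0 //.
rewrite -!natrM eqr_nat mulnCA [(t' * A)%N]mulnC eqn_pmul2l // => /eqP <-.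
by rewrite dvdn_mull.
Qed.

Section RationalOrbit.
Variables (R : realType) (p1 q1 p2 q2 p z : nat).
Hypotheses (p1_gt0 : (0 < p1)%N) (q1_gt0 : (0 < q1)%N)
  (p2_gt0 : (0 < p2)%N) (q2_gt0 : (0 < q2)%N) (z_gt1 : (1 < z)%N)
  (cop2q2 : coprime p2 q2) (copz : coprime p z) (z_dvd_q2 : (z %| q2)%N)
  (p1z_pq2 : (p1 * z)%N = (p * q2)%N).

Let b1 : R := p1%:R / q1%:R.
Let b2 : R := p2%:R / q2%:R.

Lemma q1z_expn_gt0 (n : nat) : (0 < q1 ^ n * z ^ n)%N.
Proof. by rewrite muln_gt0 !expn_gt0 q1_gt0 ltnW. Qed.

Lemma Tb2_natr_div (t D : nat) : (0 < D)%N -> coprime t z ->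
  exists2 s, Tb b2 (t%:R / D%:R) = s%:R / (q2 * D)%:R & coprime s z.
Proof.
move=> D_gt0 cotz; exists ((p2 * t) %% (q2 * D))%N; first exact: Tb_natr_div.
rewrite coprime_mod_dvd ?dvdn_mulr // coprimeMl cotz andbT.
exact: coprime_dvdr cop2q2.
Qed.

(* Since [p1 / q2 = p / z], [b1] acts on a denominator [q2 * D] as [p / q1]
   acts on [z * D]. *)
Lemma Tb1_natr_div (s D : nat) : (0 < D)%N -> coprime s z ->
  exists2 t, Tb b1 (s%:R / (q2 * D)%:R) = t%:R / (q1 * (z * D))%:R
           & coprime t z.
Proof.
move=> D_gt0 cosz; have zD_gt0 : (0 < z * D)%N by rewrite muln_gt0 ltnW.
exists ((p * s) %% (q1 * (z * D)))%N; last first.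
  rewrite coprime_mod_dvd ?coprimeMl ?copz ?cosz //.
  by rewrite dvdn_mull // dvdn_mulr.
rewrite -Tb_natr_div // /Tb.
suff -> : b1 * (s%:R / (q2 * D)%:R) = p%:R / q1%:R * (s%:R / (z * D)%:R) by [].
apply/eqP; rewrite /b1 !mulf_div -!natrM eqr_div ?pnatr_eq0 -?lt0n
  ?muln_gt0 ?q1_gt0 ?q2_gt0 ?(ltnW z_gt1) ?D_gt0 // -!natrM eqr_nat.
apply/eqP.
have -> : (p1 * s * (q1 * (z * D)) = (p1 * z) * (s * (q1 * D)))%N by ring.
by rewrite p1z_pq2; ring.
Qed.

Lemma Tcomp_natr_div (t D : nat) : (0 < D)%N -> coprime t z ->
  exists2 t', Tcomp b1 b2 (t%:R / D%:R) = t'%:R / (q1 * (z * D))%:R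
            & coprime t' z.
Proof.
move=> D_gt0 cotz; rewrite /Tcomp; have [s -> cosz] := Tb2_natr_div D_gt0 cotz.
exact: Tb1_natr_div.
Qed.

Lemma iter_Tcomp1_natr_div (n : nat) : exists2 t,
  iter n (Tcomp b1 b2) 1 = t%:R / (q1 ^ n * z ^ n)%:R & coprime t z.
Proof.
elim: n => [|n [t tE cotz]]; first by exists 1%N; rewrite ?divr1 ?coprime1n.
have [t' t'E cot'z] := Tcomp_natr_div (q1z_expn_gt0 n) cotz.
exists t' => //; rewrite iterS tE t'E !expnS; congr (_ / _%:R); ring.
Qed.

Lemma Titer1E (n : nat) : Titer1 b1 b2 n = iter n (Tcomp b1 b2) 1.
Proof.
have b1_gt0 : 0 < b1 by rewrite divr_gt0 ?ltr0n.
have b2_gt0 : 0 < b2 by rewrite divr_gt0 ?ltr0n.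
have [s T21 cosz] := @Tb2_natr_div 1 1 isT (coprime1n z).
have [t T121 cotz] := @Tb1_natr_div s 1 isT cosz.
rewrite divr1 in T21; rewrite /Titer1.
suff -> : Text b1 b2 = Tcomp b1 b2 by [].
apply/funext => x; rewrite /Text; case: eqP => [->|//].
apply: Tcomp_at1E => //; rewrite T21 ?T121 divr_gt0 // ltr0n.
- exact: coprime_gt0 z_gt1 cosz.
- by rewrite muln_gt0 q2_gt0.
- exact: coprime_gt0 z_gt1 cotz.
- by rewrite !muln_gt0 q1_gt0 ltnW.
Qed.

Lemma iter_Tcomp1_inj : injective (fun n => iter n (Tcomp b1 b2) 1).
Proof.
have lt_neq n k : (n < k)%N ->
    iter n (Tcomp b1 b2) 1 != iter k (Tcomp b1 b2) 1.
  move=> lt_nk; apply/eqP.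
  have [tn -> _] := iter_Tcomp1_natr_div n.
  have [tk -> cotkz] := iter_Tcomp1_natr_div k.
  rewrite -(subnKC (ltnW lt_nk)) !expnD mulnACA.
  move=> /(natr_div_eq_dvd (q1z_expn_gt0 n) (q1z_expn_gt0 _)) dvd_tk.
  move/negP: (coprime_ndvd z_gt1 cotkz); apply; apply: dvdn_trans dvd_tk.
  by rewrite dvdn_mull // dvdn_exp // subn_gt0.
by move=> n k /= E; case: (ltngtP n k) => // /lt_neq; rewrite E eqxx.
Qed.

End RationalOrbit.

Theorem lemma4p1 (R : realType) (p1 q1 p2 q2 p z : nat) :
  (0 < q1)%N -> (0 < q2)%N -> (q1 < p1)%N -> (q2 < p2)%N ->
  coprime p1 q1 -> coprime p2 q2 ->
  (forall k : nat, p1 <> (k * q2)%N) ->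
  (0 < z)%N -> coprime p z -> (p1 * z)%N = (p * q2)%N ->
  (forall n : nat, (1 <= n)%N ->
     exists (t : int) (m : nat), (1 <= m)%N /\
       Titer1 (p1%:R / q1%:R : R) (p2%:R / q2%:R) n
         = t%:~R / (m%:R * z%:R ^+ n) /\
       coprimez t z%:Z) /\
  ~ finite_set (orbit1 (p1%:R / q1%:R : R) (p2%:R / q2%:R)).
Proof.
move=> q1_gt0 q2_gt0 q1_lt_p1 q2_lt_p2 _ cop2q2 p1_not_mul z_gt0 copz p1z_pq2.
have z_gt1 := reduced_denom_gt1 p1_not_mul z_gt0 p1z_pq2.
have z_dvd_q2 := reduced_denom_dvd copz p1z_pq2.
have p1_gt0 := leq_ltn_trans (leq0n q1) q1_lt_p1.
have p2_gt0 := leq_ltn_trans (leq0n q2) q2_lt_p2.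
have iterE := Titer1E R p1_gt0 q1_gt0 p2_gt0 q2_gt0 z_gt1 cop2q2 copz
  z_dvd_q2 p1z_pq2.
split.
  move=> n _; have [t tE cotz] := iter_Tcomp1_natr_div R q1_gt0 q2_gt0 z_gt1
    cop2q2 copz z_dvd_q2 p1z_pq2 n.
  exists (Posz t), (q1 ^ n)%N; rewrite expn_gt0 q1_gt0 coprimezE iterE tE.
  by rewrite natrM !natrX.
have iter_inj := @iter_Tcomp1_inj R _ _ _ _ _ _ q1_gt0 q2_gt0 z_gt1 cop2q2
  copz z_dvd_q2 p1z_pq2.
pose f n := Titer1 (p1%:R / q1%:R : R) (p2%:R / q2%:R) n.+1.
have f_inj : injective f.
  by move=> m n; rewrite /f !iterE => /iter_inj/succn_inj.
move=> /(finite_preimage (in2W f_inj)).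
suff -> : f @^-1` orbit1 (p1%:R / q1%:R) (p2%:R / q2%:R) = [set: nat].
  exact: infinite_nat.
by apply/seteqP; split => // n _; exists n.+1.
Qed.
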